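(* Let $m\ge1$, $N=2^m$, let $\mathcal{A}\subseteq[0,N-1]$ with $\mathcal{A}$ and $\mathcal{A}^c=[0,N-1]\setminus\mathcal{A}$ nonempty, and let $\mathbf{P}\in\mathbb{F}_2^{N\times N}$ be upper triangular with unit diagonal. Then $$\mathcal{C}_{\boldsymbol{G}_N}([\max(\mathcal{A}^c)+1,N-1])\subseteq\mathcal{C}_{\mathbf{P}\boldsymbol{G}_N}(\mathcal{A})\subseteq\mathcal{C}_{\boldsymbol{G}_N}([\min(\mathcal{A}),N-1]),$$ and $$\mathcal{C}_{\boldsymbol{G}_N}([N-\min(\mathcal{A}),N-1])\subseteq\mathcal{C}_{\mathbf{P}\boldsymbol{G}_N}(\mathcal{A})^{\perp}\subseteq\mathcal{C}_{\boldsymbol{G}_N}([N-1-\max(\mathcal{A}^c),N-1]).$$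
   Context: $[\ell,u]=\{\ell,\dots,u\}$ (empty if $\ell>u$). $\boldsymbol{G}_N=\begin{pmatrix}1&0\\1&1\end{pmatrix}^{\otimes m}$ over $\mathbb{F}_2$, rows/columns indexed by $0,\dots,N-1$; $\mathcal{C}_{\mathbf{B}}(\mathcal{S})$ is the code spanned by the rows of $\mathbf{B}$ indexed by $\mathcal{S}$. $\perp$ is the dual code for the standard inner product over $\mathbb{F}_2$. *)

From mathcomp Require Import all_boot all_algebra.
Set Implicit Arguments. Unset Strict Implicit. Unset Printing Implicit Defensive.
Import GRing.Theory.
Local Open Scope ring_scope.

(* Kernel F = [[1,0],[1,1]] over F_2, indexed by bits (row bit, column bit). *)
Definition Fker (a b : bool) : 'F_2 := if ~~ a && b then 0 else 1.

(* G_N = F^{\otimes m}, N = 2^m: the (i,j) entry of a Kronecker power is the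
   product of the kernel entries at the binary digits of i and j. *)
Definition polarG (m : nat) : 'M['F_2]_(2 ^ m) :=
  \matrix_(i, j) \prod_(k < m) Fker (odd (i %/ 2 ^ k)) (odd (j %/ 2 ^ k)).

Definition code (n : nat) (B : 'M['F_2]_n) (S : {set 'I_n}) : 'rV['F_2]_n -> Prop :=
  fun x => exists c : 'I_n -> 'F_2, x = \sum_(i in S) c i *: row i B.

Definition dual (n : nat) (C : 'rV['F_2]_n -> Prop) : 'rV['F_2]_n -> Prop :=
  fun x => forall y, C y -> x *m y^T = 0.

Definition subcode (n : nat) (C D : 'rV['F_2]_n -> Prop) : Prop :=
  forall x, C x -> D x.

Definition from_idx (n l : nat) : {set 'I_n} := [set i : 'I_n | l <= i]%N.

Definition upper_unitriangular (n : nat) (P : 'M['F_2]_n) : Prop :=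
  (forall i j : 'I_n, (j < i)%N -> P i j = 0) /\ (forall i : 'I_n, P i i = 1).

From mathcomp Require Import all_boot all_algebra perm zify.
Set Implicit Arguments. Unset Strict Implicit. Unset Printing Implicit Defensive.
Import GRing.Theory.

(* Left multiplication by an upper unitriangular P is an invertible change of
   generators that preserves "vanishing on the first l coordinates", which
   sandwiches C_{PG}(A) between the two G-codes.  For the duals, the Gram
   matrix G G^T has entries prod_t (1 + [bit t i && bit t k]) over F_2: it
   vanishes when i + k >= N (the bits of i and k must then overlap) and is 1
   on the antidiagonal i + k = N - 1, so G G^T with its columns reversed is
   upper unitriangular.  Hence C_G([l, N-1]) and C_G([N-l, N-1]) are each
   other's duals, and the dual inclusions follow from the primal ones. *)

Definition bit (t n : nat) : bool := odd (n %/ 2 ^ t).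

Lemma bit0 n : bit 0 n = odd n.
Proof. by rewrite /bit expn0 divn1. Qed.

Lemma bitS t n : bit t.+1 n = bit t n./2.
Proof. by rewrite /bit expnS divnMA -divn2. Qed.

Lemma bit_small m j : (j < 2 ^ m)%N -> bit m j = false.
Proof. by move=> lt_j; rewrite /bit divn_small. Qed.

Lemma bit_exp2D_top m j : (j < 2 ^ m)%N -> bit m (2 ^ m + j) = true.
Proof.
by move=> lt_j; rewrite /bit -{1}[(2 ^ m)%N]mul1n divnMDl ?expn_gt0 ?divn_small.
Qed.

Lemma bit_exp2D_low m j t : (t < m)%N -> bit t (2 ^ m + j) = bit t j.
Proof.
move=> lt_tm; rewrite /bit -(subnK (ltnW lt_tm)) expnD divnMDl ?expn_gt0 //.
by rewrite oddD oddX subn_eq0 leqNgt lt_tm.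
Qed.

Lemma half_lt_exp2 m n : (n < 2 ^ m.+1)%N -> (n./2 < 2 ^ m)%N.
Proof. by rewrite -divn2 ltn_divLR // -expnSr. Qed.

Lemma disjoint_bits_add_ltn m i k : (i < 2 ^ m)%N -> (k < 2 ^ m)%N ->
  (forall t, (t < m)%N -> ~~ (bit t i && bit t k)) -> (i + k < 2 ^ m)%N.
Proof.
elim: m i k => [|m IH] i k; first by rewrite expn0 !ltnS !leqn0 => /eqP-> /eqP->.
move=> lt_i lt_k disj.
have lt_half : (i./2 + k./2 < 2 ^ m)%N.
  by apply: IH; rewrite ?half_lt_exp2 // => t lt_tm; rewrite -!bitS; apply: disj.
have odd_le1 : (odd i + odd k <= 1)%N.
  by move: (disj 0%N isT); rewrite !bit0; case: (odd i); case: (odd k).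
move: lt_half odd_le1; rewrite expnS.
have := odd_double_half i; have := odd_double_half k; rewrite -!mul2n; lia.
Qed.

Lemma add_exp2_pred_disjoint_bits m i k : (i + k = (2 ^ m).-1)%N ->
  forall t, (t < m)%N -> ~~ (bit t i && bit t k).
Proof.
elim: m i k => [|m IH] i k // sum_ik t lt_tm.
have odd_ik : odd i (+) odd k.
  rewrite -oddD sum_ik expnS -subn1 oddB ?muln_gt0 ?expn_gt0 //.
  by rewrite oddM.
case: t lt_tm => [|t] lt_tm; first by rewrite !bit0; case: (odd i) odd_ik; case: (odd k).
rewrite !bitS; apply: IH => //; move: sum_ik odd_ik.
have := odd_double_half i; have := odd_double_half k; have := expn_gt0 2 m.
rewrite expnS -!mul2n; case: (odd i); case: (odd k) => //=; lia.
Qed.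

Local Open Scope ring_scope.

(* Splitting off the top bit of j reduces the sum over 2^(m+1) to two sums over 2^m. *)
Lemma sum_prod_bits (R : comPzSemiRingType) m (f : nat -> bool -> R) :
  \sum_(j < 2 ^ m) \prod_(t < m) f t (bit t j) =
  \prod_(t < m) (f t false + f t true).
Proof.
elim: m => [|m IH]; first by rewrite expn0 big_ord1 !big_ord0.
set F := fun j => \prod_(t < m.+1) f t (bit t j).
rewrite big_ord_recr /= -IH mulrDr !mulr_suml -(big_mkord xpredT F).
rewrite expnS mul2n -addnn (big_cat_nat _ (leq_addr _ _)) //=.
rewrite -{2}[(2 ^ m)%N]add0n big_addn addnK !big_mkord.
congr (_ + _); apply: eq_bigr => j _; rewrite /F big_ord_recr /=.
  by rewrite bit_small.
rewrite addnC bit_exp2D_top //; congr (_ * _).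
by apply: eq_bigr => t _; rewrite bit_exp2D_low.
Qed.

Definition vanishes_below (R : pzRingType) n l (v : 'rV[R]_n) : Prop :=
  forall k : 'I_n, (k < l)%N -> v 0 k = 0.

Section UpperTriangular.

Variables (R : pzRingType) (n : nat) (T : 'M[R]_n).
Hypothesis T_upper : forall i j : 'I_n, (j < i)%N -> T i j = 0.

Lemma vanishes_below_mulmx l (v : 'rV_n) :
  vanishes_below l v -> vanishes_below l (v *m T).
Proof.
move=> v0 k lt_kl; rewrite mxE big1 // => i _.
case: (ltnP i l) => [lt_il|le_li]; first by rewrite v0 ?mul0r.
by rewrite T_upper ?mulr0 // (leq_trans lt_kl).
Qed.

Hypothesis T_diag : forall i : 'I_n, T i i = 1.

Lemma vanishes_below_mulmxK l (v : 'rV_n) :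
  vanishes_below l (v *m T) -> vanishes_below l v.
Proof.
move=> vT0; suff v0 j (k : 'I_n) : k = j :> nat -> (k < l)%N -> v 0 k = 0.
  by move=> k; apply: v0.
elim/ltn_ind: j k => j IH k eq_kj lt_kl.
have := vT0 k lt_kl; rewrite mxE (bigD1 k) //= T_diag mulr1 big1 ?addr0 //.
move=> i neq_ik; case: (ltngtP i k) => [lt_ik|lt_ki|/val_inj eq_ik].
- by rewrite (IH _ _ i erefl) ?mul0r -?eq_kj // (ltn_trans lt_ik).
- by rewrite T_upper ?mulr0.
- by rewrite eq_ik eqxx in neq_ik.
Qed.

End UpperTriangular.

Lemma unitriangular_unitmx (R : comUnitRingType) n (T : 'M[R]_n) :
  (forall i j : 'I_n, (j < i)%N -> T i j = 0) -> (forall i, T i i = 1) ->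
  T \in unitmx.
Proof.
move=> T_upper T_diag; rewrite unitmxE -det_tr det_trig.
  by rewrite big1 ?unitr1 // => i _; rewrite mxE T_diag.
by apply/is_trig_mxP => i j lt_ij; rewrite mxE T_upper.
Qed.

Section Codes.

Variable n : nat.
Implicit Types (B P : 'M['F_2]_n) (S : {set 'I_n}).

Lemma codeP B S x :
  code B S x <-> exists2 v : 'rV_n, (forall k, k \notin S -> v 0 k = 0) & x = v *m B.
Proof.
rewrite /code; split=> [[c ->]|[v v0 ->]].
  exists (\row_k (if k \in S then c k else 0)) => [k /negbTE notSk|].
    by rewrite mxE notSk.
  rewrite mulmx_sum_row [RHS](bigID (mem S)) /= [X in _ = _ + X]big1 ?addr0.
    by apply: eq_bigr => i Si; rewrite mxE Si.
  by move=> i /negbTE notSi; rewrite mxE notSi scale0r.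
exists (fun k => v 0 k).
rewrite mulmx_sum_row [LHS](bigID (mem S)) /= [X in _ + X = _]big1 ?addr0 //.
by move=> i notSi; rewrite v0 ?scale0r.
Qed.

Lemma notin_from_idx l (k : 'I_n) : (k \notin from_idx n l) = (k < l)%N.
Proof. by rewrite inE -ltnNge. Qed.

Lemma code_from_idxP B l x :
  code B (from_idx n l) x <-> exists2 v, vanishes_below l v & x = v *m B.
Proof.
rewrite codeP; split=> [] [v v0 ->]; exists v => // k.
  by rewrite -notin_from_idx; apply: v0.
by rewrite notin_from_idx; apply: v0.
Qed.

Lemma row_code_from_idx B l (k : 'I_n) : (l <= k)%N -> code B (from_idx n l) (row k B).
Proof.
move=> le_lk; apply/code_from_idxP; exists (delta_mx 0 k); last exact: rowE.
move=> j lt_jl; rewrite mxE eqxx /=; case: eqP => // eq_jk.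
by rewrite eq_jk ltnNge le_lk in lt_jl.
Qed.

Lemma dual_subcode (C D : 'rV['F_2]_n -> Prop) :
  subcode C D -> subcode (dual D) (dual C).
Proof. by move=> CD x xD y /CD; apply: xD. Qed.

Lemma code_mul_sub_from_idx B P S l :
  (forall i j : 'I_n, (j < i)%N -> P i j = 0) -> S \subset from_idx n l ->
  subcode (code (P *m B) S) (code B (from_idx n l)).
Proof.
move=> P_upper /subsetP sub_S x /codeP [v v0 ->]; apply/code_from_idxP.
exists (v *m P); last by rewrite mulmxA.
apply: vanishes_below_mulmx => // k lt_kl; apply: v0.
by apply: contraTN lt_kl => /sub_S; rewrite -notin_from_idx => ->.
Qed.

Lemma code_from_idx_sub_mul B P S l :
  upper_unitriangular P -> from_idx n l \subset S ->
  subcode (code B (from_idx n l)) (code (P *m B) S).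
Proof.
move=> [P_upper P_diag] /subsetP sub_S x /code_from_idxP [w w0 ->].
have P_unit : P \in unitmx by apply: unitriangular_unitmx.
apply/codeP; exists (w *m invmx P); last by rewrite mulmxA mulmxKV.
move=> k notSk; have : (k < l)%N.
  by rewrite -notin_from_idx; apply: contra notSk; apply: sub_S.
by apply: (vanishes_below_mulmxK P_upper P_diag); rewrite mulmxKV.
Qed.

End Codes.

Section AntitriangularGram.

Variables (n : nat) (B : 'M['F_2]_n).
Hypothesis gram_eq0 : forall i k : 'I_n, (n <= i + k)%N -> (B *m B^T) i k = 0.
Hypothesis gram_antidiag : forall i k : 'I_n, (i + k = n.-1)%N -> (B *m B^T) i k = 1.

Let rev_gram := col_perm (perm (@rev_ord_inj n)) (B *m B^T).

Let rev_gramE (i j : 'I_n) : rev_gram i j = (B *m B^T) i (rev_ord j).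
Proof. by rewrite mxE permE. Qed.

Let rev_gram_upper (i j : 'I_n) : (j < i)%N -> rev_gram i j = 0.
Proof. by move=> lt_ji; rewrite rev_gramE gram_eq0 //=; have := ltn_ord j; lia. Qed.

Let rev_gram_diag (i : 'I_n) : rev_gram i i = 1.
Proof. by rewrite rev_gramE gram_antidiag //=; have := ltn_ord i; lia. Qed.

Lemma antitriangular_gram_unitmx : B \in unitmx.
Proof.
have := unitriangular_unitmx rev_gram_upper rev_gram_diag.
by rewrite /rev_gram col_permE !unitmx_mul => /andP [/andP []].
Qed.

Lemma code_from_idx_sub_dual l l' : (n <= l + l')%N ->
  subcode (code B (from_idx n l)) (dual (code B (from_idx n l'))).
Proof.
move=> le_n x /code_from_idxP [v v0 ->] y /code_from_idxP [u u0 ->].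
have vM0 (k : 'I_n) : (l' <= k)%N -> (v *m (B *m B^T)) 0 k = 0.
  move=> le_l'k; rewrite mxE big1 // => i _.
  case: (ltnP i l) => [lt_il|le_li]; first by rewrite v0 ?mul0r.
  by rewrite gram_eq0 ?mulr0 // (leq_trans le_n) ?leq_add.
rewrite trmx_mul !mulmxA -(mulmxA v); apply/matrixP => i j; rewrite !ord1.
rewrite mxE [RHS]mxE big1 // => k _; rewrite [u^T _ _]mxE.
by case: (ltnP k l') => [/u0->|/vM0->]; rewrite ?mulr0 ?mul0r.
Qed.

Lemma dual_code_from_idx_sub l :
  subcode (dual (code B (from_idx n l))) (code B (from_idx n (n - l))).
Proof.
move=> x x_dual; have B_unit := antitriangular_gram_unitmx.
apply/code_from_idxP; exists (x *m invmx B); last by rewrite mulmxKV.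
have x_orth (k : 'I_n) : (l <= k)%N -> (x *m B^T) 0 k = 0.
  move=> le_lk; have := x_dual _ (row_code_from_idx B le_lk).
  by rewrite tr_row colE mulmxA -colE => /matrixP/(_ 0 0); rewrite !mxE.
apply: (vanishes_below_mulmxK rev_gram_upper rev_gram_diag) => j lt_j.
have -> : (x *m invmx B *m rev_gram) 0 j = (x *m invmx B *m (B *m B^T)) 0 (rev_ord j).
  by rewrite [LHS]mxE [RHS]mxE; apply: eq_bigr => i _; rewrite rev_gramE.
by rewrite mulmxA mulmxKV // x_orth //=; lia.
Qed.

End AntitriangularGram.

Lemma polarG_gram m (i k : 'I_(2 ^ m)) :
  (polarG m *m (polarG m)^T) i k = \prod_(t < m) (1 + (bit t i && bit t k)%:R).
Proof.
pose f t c := Fker (bit t i) c * Fker (bit t k) c.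
transitivity (\sum_(j < 2 ^ m) \prod_(t < m) f t (bit t j)).
  by rewrite mxE; apply: eq_bigr => j _; rewrite !mxE -big_split.
rewrite sum_prod_bits; apply: eq_bigr => t _ /=.
by rewrite /f /Fker; case: (bit t i); case: (bit t k); rewrite /= ?mulr1 ?mulr0 ?addr0.
Qed.

Lemma polarG_gram_eq0 m (i k : 'I_(2 ^ m)) : (2 ^ m <= i + k)%N ->
  (polarG m *m (polarG m)^T) i k = 0.
Proof.
move=> le_N; rewrite polarG_gram.
have [t common_t] : exists t : 'I_m, bit t i && bit t k.
  apply/existsP; apply: contraTT le_N => /existsPn disj; rewrite -ltnNge.
  by apply: disjoint_bits_add_ltn => // t lt_tm; apply: (disj (Ordinal lt_tm)).
by rewrite (bigD1 t) //= common_t (_ : 1 + 1 = 0) ?mul0r; last exact/eqP.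
Qed.

Lemma polarG_gram_antidiag m (i k : 'I_(2 ^ m)) : (i + k = (2 ^ m).-1)%N ->
  (polarG m *m (polarG m)^T) i k = 1.
Proof.
move=> sum_ik; rewrite polarG_gram big1 // => t _.
by rewrite (negbTE (add_exp2_pred_disjoint_bits sum_ik (ltn_ord t))) addr0.
Qed.

Theorem proposition4 (m : nat) (A : {set 'I_(2 ^ m)}) (P : 'M['F_2]_(2 ^ m))
  (a b : nat) :
  (1 <= m)%N ->
  A != set0 -> ~: A != set0 ->
  (* a = min(A) *)
  (exists2 i : 'I_(2 ^ m), i \in A & nat_of_ord i = a) ->
  (forall i : 'I_(2 ^ m), i \in A -> (a <= i)%N) ->
  (* b = max(A^c) *)
  (exists2 i : 'I_(2 ^ m), i \in ~: A & nat_of_ord i = b) ->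
  (forall i : 'I_(2 ^ m), i \in ~: A -> (i <= b)%N) ->
  upper_unitriangular P ->
  [/\ subcode (code (polarG m) (from_idx (2 ^ m) b.+1)) (code (P *m polarG m) A),
      subcode (code (P *m polarG m) A) (code (polarG m) (from_idx (2 ^ m) a)),
      subcode (code (polarG m) (from_idx (2 ^ m) (2 ^ m - a)))
              (dual (code (P *m polarG m) A))
    & subcode (dual (code (P *m polarG m) A))
              (code (polarG m) (from_idx (2 ^ m) (2 ^ m - 1 - b)))].
Proof.
move=> _ _ _ [ia _ <-] a_min _ b_max P_unitri.
have gram_eq0 := @polarG_gram_eq0 m; have gram_antidiag := @polarG_gram_antidiag m.
have primal_lo : subcode (code (polarG m) (from_idx _ b.+1)) (code (P *m polarG m) A).
  apply: code_from_idx_sub_mul => //; apply/subsetP => i; rewrite inE => lt_bi.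
  by apply: contraTT lt_bi => notAi; rewrite -leqNgt b_max ?inE.
have primal_hi : subcode (code (P *m polarG m) A) (code (polarG m) (from_idx _ ia)).
  apply: code_mul_sub_from_idx; first by case: P_unitri.
  by apply/subsetP => i Ai; rewrite inE a_min.
have le_N : (2 ^ m <= 2 ^ m - ia + ia)%N by rewrite subnK // ltnW.
split=> // x.
- by move/(code_from_idx_sub_dual gram_eq0 le_N)/(dual_subcode primal_hi).
- rewrite subnAC subn1 -subnS.
  by move/(dual_subcode primal_lo)/(dual_code_from_idx_sub gram_eq0 gram_antidiag).
Qed.
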